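(* Let $m$ be an integer with $m=3$ or $m\geqslant 5$, and let $\mathcal{H}_m$ be the binary Hamming code of length $n=2^m-1$ (an $[n,n-m,3]$ code). Then $\mathcal{H}_m$ is log-concave.
   Context: The binary Hamming code $\mathcal{H}_m$ is the binary linear code of length $2^m-1$ whose parity-check matrix has as columns all $2^m-1$ nonzero vectors of $\mathbb{F}_2^m$ (equivalently, the dual of the binary simplex code). For a linear code $\mathcal C$ of length $n$, $A_i$ denotes the number of codewords of Hamming weight $i$. The nonzero weight distribution of $\mathcal C$ is the subsequence $a_0,a_1,\dots,a_N$ of $A_0,A_1,\dots,A_n$ consisting of the nonzero values, in their order of appearance (so $a_0=A_0=1$). A sequence $a_0,\dots,a_N$ is log-concave if $a_i^2\geqslant a_{i-1}a_{i+1}$ for all $1\leqslant i\leqslant N-1$. A linear code is called log-concave if its nonzero weight distribution is log-concave. *)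

From mathcomp Require Import all_boot all_algebra.
Set Implicit Arguments. Unset Strict Implicit. Unset Printing Implicit Defensive.
Import GRing.Theory.
Local Open Scope ring_scope.

Definition hweight (n : nat) (x : 'rV['F_2]_n) : nat := #|[set j | x ord0 j != 0%R]|.

(* Parity-check matrix of the binary Hamming code H_m: an m x (2^m - 1) matrix
   whose j-th column (j = 0 .. 2^m-2) is the binary expansion of j+1
   (bit i in row i). Its columns are exactly all nonzero vectors of F_2^m. *)
Definition hamming_pcm (m : nat) : 'M['F_2]_(m, 2 ^ m - 1) :=
  \matrix_(i < m, j < 2 ^ m - 1) (odd ((j.+1) %/ 2 ^ i))%:R.

Definition hamming_code (m : nat) : {set 'rV['F_2]_(2 ^ m - 1)} :=
  [set x | x *m (hamming_pcm m)^T == 0].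

Definition weight_count (n : nat) (C : {set 'rV['F_2]_n}) (i : nat) : nat :=
  #|[set x in C | hweight x == i]|.

Definition nonzero_weight_distribution (n : nat) (C : {set 'rV['F_2]_n}) : seq nat :=
  [seq a <- [seq weight_count C i | i <- iota 0 n.+1] | a != 0%N].

Definition log_concave_seq (s : seq nat) : Prop :=
  forall i : nat, (0 < i)%N -> (i.+1 < size s)%N ->
    (nth 0 s i.-1 * nth 0 s i.+1 <= nth 0 s i ^ 2)%N.

Definition log_concave_code (n : nat) (C : {set 'rV['F_2]_n}) : Prop :=
  log_concave_seq (nonzero_weight_distribution C).

(* The Hamming code of length n = 2k + 1, k = 2^(m-1) - 1, is perfect: every word lies
   within distance one of exactly one codeword.  Sorting the words of weight w + 1 by
   their nearest codeword gives C(n, w + 1) = A_(w+1) + (w + 2) A_(w+2) + (n - w) A_w,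
   whose solution is (n + 1) A_t = C(n, t) + (-1)^⌈t/2⌉ n C(k, ⌊t/2⌋).  For t = 2p - 1
   and t = 2p this reads (n + 1) A_t = C(n, t) (1 ± e_p) with the same deviation
   e_p = n C(k, p) / C(n, 2p), and e_(p+1) = e_p (2p + 1) / (n - 2p).  Binomial
   coefficients satisfy C(n, i-1) C(n, i+1) <= C(n, i)^2 i / (i + 1), and this margin
   absorbs the ratio of consecutive factors 1 ± e_p, 1 ± e_(p+1) as soon as k >= 11.
   The distribution is symmetric, A_1 = A_2 = 0, and A_4 <= A_3^2 holds for all k >= 2;
   for m = 3 nothing else has to be checked. *)

From mathcomp Require Import all_boot all_order all_algebra.
From mathcomp Require Import zify ring lra.

Set Implicit Arguments.
Unset Strict Implicit.
Unset Printing Implicit Defensive.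

Import Order.TTheory GRing.Theory Num.Theory.
Local Open Scope ring_scope.

(** * Binary vectors and perfect codes *)

Lemma F2_natr_neq0 (a : 'F_2) : a = (a != 0)%:R.
Proof. by case: a => [[|[|]]] //= ?; apply: val_inj. Qed.

Lemma oppmx_F2 p q (v : 'M['F_2]_(p, q)) : - v = v.
Proof. by apply/matrixP => i j; rewrite mxE oppr_pchar2 // pchar_Fp. Qed.

Lemma addmxx_F2 p q (v : 'M['F_2]_(p, q)) : v + v = 0.
Proof. by rewrite -[X in X + _]oppmx_F2 addNr. Qed.

Section BinaryVectors.

Variable n : nat.
Implicit Types (x y : 'rV['F_2]_n) (C : {set 'rV['F_2]_n}).

Definition hsupp x : {set 'I_n} := [set j | x ord0 j != 0].

Lemma hweightE x : hweight x = #|hsupp x|.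
Proof. by []. Qed.

Lemma hsupp_inj : injective hsupp.
Proof.
move=> x y /setP eq_xy; apply/rowP => j.
by rewrite [x _ _]F2_natr_neq0 [y _ _]F2_natr_neq0; move: (eq_xy j); rewrite !inE => ->.
Qed.

Lemma hweight_eq0 x : (hweight x == 0%N) = (x == 0).
Proof.
rewrite hweightE cards_eq0; apply/eqP/eqP => [hsupp0|->].
  by apply: hsupp_inj; rewrite hsupp0; apply/setP => j; rewrite !inE mxE eqxx.
by apply/setP => j; rewrite !inE mxE eqxx.
Qed.

Lemma card_hweight w : #|[set x : 'rV['F_2]_n | hweight x == w]| = 'C(n, w).
Proof.
rewrite -(card_imset _ hsupp_inj) -[X in 'C(X, _)](card_ord n) -card_draws.
apply: eq_card => A; rewrite inE; apply/imsetP/idP => [[x] | cardA].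
  by rewrite inE => /eqP <- ->.
have hsuppA : hsupp (\row_j (j \in A)%:R) = A.
  by apply/setP => j; rewrite inE mxE; case: (j \in A); rewrite ?oner_eq0 ?eqxx.
by exists (\row_j (j \in A)%:R); rewrite // inE hweightE hsuppA.
Qed.

Lemma hweight_add_delta x j :
  hweight (x + delta_mx ord0 j) = if x ord0 j != 0 then (hweight x).-1 else (hweight x).+1.
Proof.
have hsuppD : hsupp (x + delta_mx ord0 j) = if x ord0 j != 0 then hsupp x :\ j else j |: hsupp x.
  apply/setP => l; rewrite inE !mxE eqxx /=.
  have [->|ne] := eqVneq l j; last by rewrite addr0; case: ifP; rewrite !inE (negbTE ne).
  by rewrite {1}[x ord0 j]F2_natr_neq0; case: ifP; rewrite !inE eqxx.
rewrite !hweightE hsuppD; case: ifP => xj.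
  by rewrite (cardsD1 j (hsupp x)) inE xj.
by rewrite cardsU1 inE xj.
Qed.

Lemma sum_hweight_add_delta x w :
  (\sum_j (hweight (x + delta_mx ord0 j)%R == w)
   = hweight x * ((hweight x).-1 == w) + (n - hweight x) * ((hweight x).+1 == w))%N.
Proof.
under eq_bigr do rewrite hweight_add_delta.
rewrite (bigID (fun j => x ord0 j != 0)) /=.
under eq_bigr => j xj do rewrite xj.
under [X in (_ + X)%N]eq_bigr => j /negbTE xj do rewrite xj.
rewrite !sum_nat_cond_const hweightE; congr (_ * _ + _ * _)%N.
have -> : [set j | ~~ (x ord0 j != 0)] = ~: hsupp x by apply/setP => j; rewrite !inE.
by rewrite cardsCs setCK card_ord.
Qed.

Lemma weight_countE C w : weight_count C w = (\sum_(y in C) (hweight y == w))%N.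
Proof.
rewrite /weight_count -sum1dep_card big_mkcondr; apply: eq_bigr => y _.
by case: (_ == _).
Qed.

Definition perfect1 C :=
  forall x, ((x \in C) + \sum_j ((x + delta_mx ord0 j)%R \in C))%N = 1%N.

Lemma sum_mem_add_delta C w :
  (\sum_x (hweight x == w) * \sum_j ((x + delta_mx ord0 j)%R \in C)
   = \sum_(y in C) \sum_j (hweight (y + delta_mx ord0 j)%R == w))%N.
Proof.
under eq_bigr do rewrite big_distrr.
rewrite exchange_big [RHS]exchange_big; apply: eq_bigr => j _ /=.
rewrite [RHS]big_mkcond (reindex_inj (addIr (delta_mx ord0 j))); apply: eq_bigr => y _ /=.
by rewrite -addrA addmxx_F2 addr0 mulnC; case: (y \in C); rewrite ?mul1n.
Qed.

Lemma perfect1_binomial C w : perfect1 C ->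
  'C(n, w) = (weight_count C w + w.+1 * weight_count C w.+1
              + \sum_(y in C) (n - hweight y) * ((hweight y).+1 == w))%N.
Proof.
move=> C_perfect; rewrite -card_hweight -sum1dep_card big_mkcond /=.
transitivity (\sum_x (hweight x == w) * ((x \in C) + \sum_j ((x + delta_mx ord0 j)%R \in C)))%N.
  by apply: eq_bigr => x _; rewrite C_perfect muln1; case: (_ == _).
under eq_bigr do rewrite mulnDr.
rewrite big_split /= sum_mem_add_delta weight_countE -addnA; congr (_ + _)%N.
  by rewrite [RHS]big_mkcond; apply: eq_bigr => y _; rewrite mulnC; case: (y \in C); rewrite ?mul1n.
under eq_bigr do rewrite sum_hweight_add_delta.
rewrite big_split /= weight_countE big_distrr /=; congr (_ + _)%N.
apply: eq_bigr => y _; case: (hweight y) => [|h]; rewrite ?muln0 //= eqSS.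
by case: eqP => [->|_]; rewrite ?muln0 ?muln1.
Qed.

Lemma perfect1_weight_count01 C : perfect1 C -> (weight_count C 0 + weight_count C 1 = 1)%N.
Proof.
move=> /(perfect1_binomial 0); rewrite bin0 mul1n big1 ?addn0 // => y _.
by rewrite muln0.
Qed.

Lemma perfect1_weight_countS C w : perfect1 C ->
  'C(n, w.+1) = (weight_count C w.+1 + w.+2 * weight_count C w.+2
                 + (n - w) * weight_count C w)%N.
Proof.
move=> /(perfect1_binomial w.+1) ->; congr (_ + _)%N.
rewrite weight_countE big_distrr; apply: eq_bigr => y _ /=.
by rewrite eqSS; case: eqP => [->|_]; rewrite ?muln0 ?muln1.
Qed.

Lemma weight_count0 C : weight_count C 0 = (0 \in C).
Proof.
rewrite /weight_count (_ : [set x in C | _] = C :&: [set 0]); last first.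
  by apply/setP => x; rewrite !inE hweight_eq0.
have [C0|C0] := boolP (0 \in C); first by rewrite (setIidPr _) ?cards1 // sub1set.
suff -> : C :&: [set 0] = set0 by rewrite cards0.
by apply/setP => x; rewrite !inE andbC; case: eqP => // ->; rewrite (negbTE C0).
Qed.

End BinaryVectors.

(** * The Hamming code *)

Lemma eq_from_low_bits m a b : (a < 2 ^ m)%N -> (b < 2 ^ m)%N ->
  (forall i, i < m -> odd (a %/ 2 ^ i) = odd (b %/ 2 ^ i))%N -> a = b.
Proof.
elim: m a b => [|m IHm] a b; first by rewrite expn0; lia.
rewrite expnS => a_lt b_lt same_bits.
have half_eq : a./2 = b./2.
  apply: IHm; [lia | lia | move=> i lt_im].
  by rewrite -!divn2 -!divnMA -expnS; apply: same_bits.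
by move: (same_bits 0 isT); rewrite expn0 !divn1; lia.
Qed.

Section HammingCode.

Variable m : nat.
Local Notation n := (2 ^ m - 1)%N.

Definition hamming_col (j : 'I_n) : 'rV['F_2]_m := row j (hamming_pcm m)^T.

Lemma hamming_col_bit (j : 'I_n) (i : 'I_m) : odd (j.+1 %/ 2 ^ i) = (hamming_col j ord0 i != 0).
Proof. by rewrite !mxE; case: odd; rewrite ?oner_eq0. Qed.

Lemma hamming_col_inj : injective hamming_col.
Proof.
move=> j j' eq_col; apply/val_inj/succn_inj/(@eq_from_low_bits m).
- by have := ltn_ord j; rewrite /=; lia.
- by have := ltn_ord j'; rewrite /=; lia.
by move=> i lt_im; rewrite !(hamming_col_bit _ (Ordinal lt_im)) eq_col.
Qed.

Lemma hamming_col_neq0 (j : 'I_n) : hamming_col j != 0.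
Proof.
apply/eqP => col0; suff : j.+1 = 0%N by [].
apply/(@eq_from_low_bits m); rewrite ?expn_gt0 //; first by have := ltn_ord j; lia.
by move=> i lt_im; rewrite (hamming_col_bit _ (Ordinal lt_im)) col0 mxE eqxx div0n.
Qed.

Lemma sum_hamming_col (v : 'rV['F_2]_m) : (\sum_(j < n) (v == hamming_col j))%N = (v != 0).
Proof.
have [->|v_neq0] := eqVneq v 0.
  by rewrite big1 // => j _; rewrite eq_sym (negbTE (hamming_col_neq0 j)).
have [j <-] : exists j, hamming_col j = v.
  have cols : [set hamming_col j | j in 'I_n] = [set~ 0].
    apply/eqP; rewrite eqEcard card_imset; last exact: hamming_col_inj.
    apply/andP; split; last by rewrite cardsC1 card_mx card_Fp // mul1n card_ord subn1.
    by apply/subsetP => _ /imsetP[j _ ->]; rewrite !inE hamming_col_neq0.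
  have : v \in [set hamming_col j | j in 'I_n] by rewrite cols !inE.
  by case/imsetP => j _ ->; exists j.
rewrite (bigD1 j) //= eqxx big1 // => i ne_ij.
by rewrite (inj_eq hamming_col_inj) eq_sym (negbTE ne_ij).
Qed.

Lemma hamming_code_perfect : perfect1 (hamming_code m).
Proof.
move=> x; under eq_bigr => j _ do
  rewrite inE mulmxDl -rowE addr_eq0 oppmx_F2 -/(hamming_col j).
by rewrite sum_hamming_col inE; case: (_ == 0).
Qed.

Lemma mem0_hamming_code : 0 \in hamming_code m.
Proof. by rewrite inE mul0mx. Qed.

End HammingCode.

(** * Binomial identities *)

Lemma bin_recurrence n i :
  (i.+2 * 'C(n, i.+2) + 'C(n, i.+1) + (n - i) * 'C(n, i) = n.+1 * 'C(n, i.+1))%N.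
Proof.
rewrite (mul_bin_left n i.+1) -(mul_bin_left n i).
have [le_in|lt_ni] := leqP i.+1 n; last by rewrite bin_small // !muln0.
by rewrite -[X in (_ + X + _)%N]mul1n -!mulnDl; congr (_ * _)%N; lia.
Qed.

Lemma bin_odd_pair k h :
  ('C(k.*2.+1, h.*2.+1) * 'C(k, h.+1) = 'C(k.*2.+1, h.*2.+2) * 'C(k, h))%N.
Proof.
have evenN := mul_bin_left k.*2.+1 h.*2.+1.
rewrite (_ : k.*2.+1 - h.*2.+1 = 2 * (k - h))%N in evenN; last by lia.
apply/eqP; rewrite -(eqn_pmul2l (_ : 0 < 2 * h.+1)%N) //; apply/eqP.
transitivity (2 * 'C(k.*2.+1, h.*2.+1) * (h.+1 * 'C(k, h.+1)))%N; first by ring.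
rewrite mul_bin_left.
transitivity ('C(k, h) * (h.*2.+2 * 'C(k.*2.+1, h.*2.+2)))%N; last by rewrite -mul2n; ring.
by rewrite evenN; ring.
Qed.

Lemma bin_pair_step k p : (p < k)%N ->
  ((k - p).*2.+1 * 'C(k, p.+1) * 'C(k.*2.+1, p.*2)
   = p.*2.+1 * 'C(k, p) * 'C(k.*2.+1, p.*2.+2))%N.
Proof.
move=> lt_pk; have oddN := mul_bin_left k.*2.+1 p.*2; have evenN := mul_bin_left k.*2.+1 p.*2.+1.
rewrite (_ : k.*2.+1 - p.*2 = (k - p).*2.+1)%N in oddN; last by lia.
rewrite (_ : k.*2.+1 - p.*2.+1 = 2 * (k - p))%N in evenN; last by lia.
apply/eqP; rewrite -(eqn_pmul2l (_ : 0 < 2 * p.+1 * p.+1)%N) //; apply/eqP.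
transitivity (2 * p.+1 * (k - p).*2.+1 * 'C(k.*2.+1, p.*2) * (p.+1 * 'C(k, p.+1)))%N.
  by ring.
rewrite mul_bin_left.
transitivity (p.+1 * 'C(k, p) * (p.*2.+1 * (p.*2.+2 * 'C(k.*2.+1, p.*2.+2))))%N; last first.
  by rewrite -mul2n; ring.
rewrite evenN.
transitivity (p.+1 * 'C(k, p) * 2 * (k - p) * (p.*2.+1 * 'C(k.*2.+1, p.*2.+1)))%N; last by ring.
by rewrite oddN; ring.
Qed.

Lemma bin_log_concave n i : (0 < i)%N ->
  ('C(n, i.-1) * 'C(n, i.+1) * i.+1 <= 'C(n, i) ^ 2 * i)%N.
Proof.
case: i => [|i] // _ /=.
rewrite -mulnA (mulnC _ i.+2) mul_bin_left.
rewrite (_ : 'C(n, i.+1) ^ 2 * i.+1 = 'C(n, i.+1) * (i.+1 * 'C(n, i.+1)))%N; last by ring.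
rewrite mul_bin_left mulnCA [X in (_ <= X)%N]mulnCA mulnC [X in (_ <= X)%N]mulnC.
by rewrite (mulnC 'C(n, i.+1)) leq_mul2l leq_sub2l ?orbT.
Qed.

Lemma bin4_le_bin3_sq n : (n.+1 * 'C(n, 4) <= 'C(n, 3) ^ 2)%N.
Proof.
have bin3 : (6 * 'C(n, 3) = n * (n - 1) * (n - 2))%N.
  have := mul_bin_left n 2; have := mul_bin_left n 1; rewrite bin1 => e2 e3.
  by rewrite (_ : 6 = 2 * 3)%N // -mulnA e3 mulnCA e2; ring.
have bin3_ge : (n.+1 * (n - 3) <= 4 * 'C(n, 3))%N.
  rewrite -(leq_pmul2l (_ : 0 < 6)%N) // [X in (_ <= X)%N]mulnCA bin3.
  case: n {bin3} => [|[|[|q]]] //; rewrite !subSS !subn0; nia.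
rewrite -(leq_pmul2l (_ : 0 < 4)%N) // mulnCA mul_bin_left mulnA.
by rewrite expnS expn1 mulnA leq_mul2r bin3_ge orbT.
Qed.

Lemma ler_log_concave_factors (R : realFieldType) (c0 c1 c2 a b g h : R) :
  0 < a -> 0 < b -> 0 <= c0 * c2 -> 0 <= g -> 0 <= h ->
  c0 * c2 * a <= c1 ^+ 2 * b -> b * g <= a * h -> c0 * c2 * (g * h) <= c1 ^+ 2 * h ^+ 2.
Proof.
move=> a_gt0 b_gt0 c02_ge0 g_ge0 h_ge0 bin_ab gh.
rewrite mulrA [h ^+ 2]expr2 mulrA; apply: ler_wpM2r => //.
rewrite -(ler_pM2r (mulr_gt0 a_gt0 b_gt0)).
have -> : c0 * c2 * g * (a * b) = c0 * c2 * a * (b * g) by ring.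
have -> : c1 ^+ 2 * h * (a * b) = c1 ^+ 2 * b * (a * h) by ring.
by apply: ler_pM => //; apply: mulr_ge0 => //; apply: ltW.
Qed.

(** * Log-concave sequences *)

Lemma log_concave_cons x s :
  (x * nth 0 s 1 <= nth 0 s 0 ^ 2)%N -> log_concave_seq s -> log_concave_seq (x :: s).
Proof.
by move=> head_lc s_lc [|[|i]] // _ /= lt_is; apply: (s_lc i.+1).
Qed.

Lemma log_concave_rcons s y :
  (nth 0 s (size s).-2 * y <= nth 0 s (size s).-1 ^ 2)%N ->
  log_concave_seq s -> log_concave_seq (rcons s y).
Proof.
move=> last_lc s_lc i i_gt0; rewrite size_rcons ltnS leq_eqVlt => /orP[/eqP i_eq|lt_is].
  rewrite !nth_rcons -i_eq ltnn eqxx ltnSn (leq_ltn_trans (leq_pred i) (ltnSn i)).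
  by move: last_lc; rewrite -i_eq.
have [lt_is' lt_is''] : (i < size s)%N /\ (i.-1 < size s)%N by lia.
by rewrite !nth_rcons lt_is lt_is' lt_is''; apply: s_lc.
Qed.

Lemma log_concave_iota (a : nat -> nat) lo len :
  (forall i, (lo < i)%N -> (i.+1 < lo + len)%N -> (a i.-1 * a i.+1 <= a i ^ 2)%N) ->
  log_concave_seq [seq a i | i <- iota lo len].
Proof.
move=> a_lc i i_gt0; rewrite size_map size_iota => lt_ilen.
have [lt_lo lt_mid] : (i.-1 < len)%N /\ (i < len)%N by lia.
rewrite !(nth_map 0%N) ?size_iota // !nth_iota // addnS.
by rewrite (_ : lo + i.-1 = (lo + i).-1)%N ?a_lc //; lia.
Qed.

Section SymmetricDistribution.

Variables (a : nat -> nat) (n : nat).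
Hypotheses (n_ge7 : (7 <= n)%N) (a0 : a 0%N = 1%N) (a1 : a 1%N = 0%N) (a2 : a 2%N = 0%N).
Hypothesis a_sym : forall i, (i <= n)%N -> a (n - i)%N = a i.
Hypothesis a_gt0 : forall i, (3 <= i)%N -> (2 * i <= n)%N -> (0 < a i)%N.

Lemma symmetric_gt0 i : (3 <= i <= n - 3)%N -> (0 < a i)%N.
Proof.
move=> /andP[i_ge3 i_le]; have [le_2in|] := leqP (2 * i) n; first exact: a_gt0.
by move=> lt_n2i; rewrite -a_sym; [apply: a_gt0 | ]; lia.
Qed.

Lemma nonzero_symmetric_distribution :
  [seq x <- [seq a i | i <- iota 0 n.+1] | x != 0%N]
  = 1%N :: rcons [seq a i | i <- iota 3 (n - 5)] 1%N.
Proof.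
rewrite (_ : n.+1 = 3 + (n - 5 + 3))%N; last by lia.
rewrite !iotaD !map_cat !filter_cat add0n.
have -> : [seq a i | i <- iota (3 + (n - 5)) 3] = [:: 0; 0; 1]%N.
  rewrite /= (_ : 3 + (n - 5) = n - 2)%N; last by lia.
  rewrite (_ : (n - 2).+1 = n - 1)%N; last by lia.
  rewrite (_ : (n - 1).+1 = n - 0)%N; last by lia.
  by rewrite !a_sym ?a0 ?a1 ?a2 //; lia.
rewrite /= a0 a1 a2 /= cats1; congr (_ :: rcons _ _).
apply/all_filterP/allP => x /mapP[i]; rewrite mem_iota => i_range ->.
by rewrite -lt0n symmetric_gt0 //; lia.
Qed.

Hypothesis a34 : (a 4 <= a 3 ^ 2)%N.
Hypothesis a_lc : forall i, (4 <= i)%N -> (2 * i <= n)%N -> (a i.-1 * a i.+1 <= a i ^ 2)%N.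

Lemma symmetric_log_concave i : (4 <= i <= n - 4)%N -> (a i.-1 * a i.+1 <= a i ^ 2)%N.
Proof.
move=> /andP[i_ge4 i_le]; have [le_2in|lt_n2i] := leqP (2 * i) n; first exact: a_lc.
have [-> -> ->] : [/\ a i.-1 = a (n - i).+1, a i.+1 = a (n - i).-1 & a i = a (n - i)].
  by split; rewrite -a_sym; [congr a | | congr a | | congr a | ]; lia.
by rewrite mulnC a_lc //; lia.
Qed.

Lemma log_concave_symmetric :
  log_concave_seq [seq x <- [seq a i | i <- iota 0 n.+1] | x != 0%N].
Proof.
rewrite nonzero_symmetric_distribution; set s := [seq a i | i <- iota 3 (n - 5)].
have size_s : size s = (n - 5)%N by rewrite size_map size_iota.
have nth_s j : (j < n - 5)%N -> nth 0%N s j = a (j + 3)%N.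
  by move=> lt_jn; rewrite (nth_map 0%N) ?size_iota // nth_iota // addnC.
apply: log_concave_cons; last apply: log_concave_rcons; last apply: log_concave_iota.
- have [lt1 lt0] : (1 < n - 5)%N /\ (0 < n - 5)%N by lia.
  by rewrite !nth_rcons size_s lt1 lt0 (nth_s 1%N lt1) (nth_s 0%N lt0) mul1n; exact: a34.
- have [lt_lo lt_hi] : ((n - 5).-2 < n - 5)%N /\ ((n - 5).-1 < n - 5)%N by lia.
  rewrite size_s (nth_s _ lt_lo) (nth_s _ lt_hi) muln1.
  rewrite (_ : (n - 5).-2 + 3 = n - 4)%N; last by lia.
  rewrite (_ : (n - 5).-1 + 3 = n - 3)%N; last by lia.
  by rewrite !a_sym; [exact: a34 | lia | lia].
by move=> i i_gt3 lt_in; apply: symmetric_log_concave; lia.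
Qed.

End SymmetricDistribution.

Lemma scaled_log_concave (c x y z : nat) : (0 < c)%N ->
  (c * x)%N%:Z * (c * y)%N%:Z <= (c * z)%N%:Z ^+ 2 -> (x * y <= z ^ 2)%N.
Proof.
move=> c_gt0; rewrite expr2 -!PoszM lez_nat mulnACA [X in (_ <= X)%N]mulnACA mulnn.
by rewrite leq_pmul2l // muln_gt0 c_gt0.
Qed.

(** * The weight distribution of a perfect code *)

Definition signed_binomial k i : int := (-1) ^+ uphalf i * 'C(k, i./2)%:Z.

Lemma signed_binomial_recurrence k i : (i.+2 <= k.*2.+1)%N ->
  i.+2%:Z * signed_binomial k i.+2 + signed_binomial k i.+1
  + (k.*2.+1 - i)%:Z * signed_binomial k i = 0.
Proof.
move=> lt_iN; rewrite /signed_binomial /= !uphalf_half.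
have := odd_double_half i; set h := i./2; set s := (-1) ^+ h : int.
have bin := congr1 (fun x : nat => s * x%:Z) (mul_bin_left k h); rewrite /= in bin.
by case: (odd i) => /= i_eq; rewrite -i_eq ?add0n ?add1n ?exprS -/s in lt_iN *; lia.
Qed.

Definition scaled_weight_count k i : int :=
  'C(k.*2.+1, i)%:Z + (k.*2.+1)%:Z * signed_binomial k i.

Lemma scaled_weight_count_recurrence k i : (i.+2 <= k.*2.+1)%N ->
  i.+2%:Z * scaled_weight_count k i.+2 + scaled_weight_count k i.+1
  + (k.*2.+1 - i)%:Z * scaled_weight_count k i = (k.*2.+2 * 'C(k.*2.+1, i.+1))%N%:Z.
Proof.
move=> /signed_binomial_recurrence alt_rec.
have := congr1 (fun x => (k.*2.+1)%:Z * x) alt_rec.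
have := bin_recurrence k.*2.+1 i.
rewrite /scaled_weight_count mulr0; lia.
Qed.

Lemma scaled_weight_count0 k : scaled_weight_count k 0 = (k.*2.+2)%:Z.
Proof. by rewrite /scaled_weight_count /signed_binomial /= !bin0 expr0 mul1r mulr1; lia. Qed.

Lemma scaled_weight_count1 k : scaled_weight_count k 1 = 0.
Proof. by rewrite /scaled_weight_count /signed_binomial /= bin1 bin0 expr1; lia. Qed.

Lemma scaled_weight_count2 k : scaled_weight_count k 2 = 0.
Proof.
rewrite /scaled_weight_count /signed_binomial /= bin1 expr1 bin2.
have -> : (k.*2.+1 * k.*2)./2 = (k.*2.+1 * k)%N by rewrite -doubleMr doubleK.
lia.
Qed.

Lemma scaled_weight_count_sym k i : odd k -> (i <= k.*2.+1)%N ->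
  scaled_weight_count k (k.*2.+1 - i) = scaled_weight_count k i.
Proof.
move=> k_odd le_iN; rewrite /scaled_weight_count /signed_binomial bin_sub //.
have -> : ((k.*2.+1 - i)./2 = k - i./2)%N by lia.
rewrite bin_sub; last by lia.
by rewrite -signr_odd [in RHS]uphalf_half -[in RHS]signr_odd; congr (_ + _ * (_ ^+ _ * _)); lia.
Qed.

Lemma perfect1_scaled_weight_count n k (C : {set 'rV['F_2]_n}) :
  n = k.*2.+1 -> perfect1 C -> 0 \in C ->
  forall i, (i <= n)%N -> (n.+1 * weight_count C i)%N%:Z = scaled_weight_count k i.
Proof.
move=> n_eq C_perfect C0.
suff step i : (i.+1 <= n)%N ->
    (n.+1 * weight_count C i)%N%:Z = scaled_weight_count k i
    /\ (n.+1 * weight_count C i.+1)%N%:Z = scaled_weight_count k i.+1.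
  case=> [|i] le_in; first by case: (step 0%N); rewrite // n_eq.
  by case: (step i).
elim: i => [|i IHi] lt_in.
  have := perfect1_weight_count01 C_perfect.
  by rewrite weight_count0 C0 scaled_weight_count0 scaled_weight_count1 /=; lia.
have [Pi Pi1] := IHi (ltnW lt_in); split=> //.
have count_rec := congr1 (fun x : nat => (n.+1 * x)%N%:Z) (perfect1_weight_countS i C_perfect).
have Pi_scaled := congr1 (fun x => (n - i)%N%:Z * x) Pi.
have formula_rec := @scaled_weight_count_recurrence k i; rewrite -n_eq in formula_rec.
by apply: (@mulfI _ i.+2%:Z) => //; lia.
Qed.

(** * Deviation from the binomial coefficients *)

Definition pair_dev k p : rat := (k.*2.+1 * 'C(k, p))%:R / 'C(k.*2.+1, p.*2)%:R.

Definition pair_factor k p : rat := 1 + (-1) ^+ p * pair_dev k p.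

Lemma scaled_weight_count_pair k t : (uphalf t <= k)%N ->
  (scaled_weight_count k t)%:~R = 'C(k.*2.+1, t)%:R * pair_factor k (uphalf t) :> rat.
Proof.
have [h t_eq] : exists h, t = (odd t + h.*2)%N by exists t./2; rewrite odd_double_half.
rewrite /scaled_weight_count /signed_binomial /pair_factor /pair_dev.
rewrite intrD !intrM intr_sign -!pmulrn !natrM.
case: (odd t) t_eq => -> /=; rewrite ?add0n ?add1n ?uphalf_double ?doubleK => le_hk.
  have binN_neq0 : 'C(k.*2.+1, h.*2.+2)%:R != 0 :> rat.
    by rewrite pnatr_eq0 -lt0n bin_gt0; lia.
  have binN'_neq0 : 'C(k.*2.+1, h.*2.+1)%:R != 0 :> rat.
    by rewrite pnatr_eq0 -lt0n bin_gt0; lia.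
  have := congr1 (fun x : nat => x%:R : rat) (bin_odd_pair k h); rewrite /= !natrM => pair_eq.
  have -> : 'C(k, h.+1)%:R = 'C(k.*2.+1, h.*2.+2)%:R * 'C(k, h)%:R / 'C(k.*2.+1, h.*2.+1)%:R :> rat.
    by rewrite -pair_eq; field.
  by rewrite doubleS; field; rewrite binN_neq0.
have binN_neq0 : 'C(k.*2.+1, h.*2)%:R != 0 :> rat by rewrite pnatr_eq0 -lt0n bin_gt0; lia.
by field.
Qed.

Lemma pair_dev_ge0 k p : 0 <= pair_dev k p.
Proof. by rewrite /pair_dev divr_ge0 ?ler0n. Qed.

Lemma pair_dev1 k : (0 < k)%N -> pair_dev k 1 = 1.
Proof.
move=> k_gt0; rewrite /pair_dev bin1 bin2 (_ : _./2 = k.*2.+1 * k)%N.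
  by rewrite divff // pnatr_eq0 muln_eq0; lia.
by rewrite /= -doubleMr doubleK.
Qed.

Lemma pair_devS k p : (p < k)%N ->
  (2 * (k - p) + 1)%:R * pair_dev k p.+1 = (2 * p + 1)%:R * pair_dev k p.
Proof.
move=> lt_pk; rewrite /pair_dev doubleS.
rewrite (_ : 2 * (k - p) + 1 = (k - p).*2.+1)%N; last by lia.
rewrite (_ : 2 * p + 1 = p.*2.+1)%N; last by lia.
have a_neq0 : 'C(k.*2.+1, p.*2)%:R != 0 :> rat by rewrite pnatr_eq0 -lt0n bin_gt0; lia.
have c_neq0 : 'C(k.*2.+1, p.*2.+2)%:R != 0 :> rat by rewrite pnatr_eq0 -lt0n bin_gt0; lia.
have := congr1 (fun x : nat => x%:R : rat) (bin_pair_step lt_pk); rewrite /= !natrM => step.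
apply: (mulfI (mulf_neq0 a_neq0 c_neq0)).
transitivity ((k.*2.+1)%:R * ((k - p).*2.+1%:R * 'C(k, p.+1)%:R * 'C(k.*2.+1, p.*2)%:R) : rat).
  by field.
by rewrite step; field.
Qed.

Lemma pair_dev2 k : (1 < k)%N -> (2 * (k - 1) + 1)%:R * pair_dev k 2 = 3.
Proof. by move=> k_gt1; rewrite pair_devS // pair_dev1 ?mulr1 //; lia. Qed.

Lemma pair_devS_le k p : (0 < p)%N -> (p.*2 <= k)%N -> pair_dev k p.+1 <= pair_dev k p.
Proof.
move=> p_gt0 le_pk; have lt_pk : (p < k)%N by lia.
have := pair_devS lt_pk; have := pair_dev_ge0 k p.+1.
have : (2 * p + 1)%:R <= (2 * (k - p) + 1)%:R :> rat by rewrite ler_nat; lia.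
have : 0 < (2 * p + 1)%:R :> rat by rewrite addn1 ltr0Sn.
by move=> *; nra.
Qed.

(* Equivalent to (2k - 21)(k + 1) >= 0: the source of the bound k >= 11. *)
Lemma pair_dev23 k : (11 <= k)%N -> 5 * pair_dev k 2 + 6 * pair_dev k 3 <= 1.
Proof.
move=> k_ge11; have k_gt2 : (2 < k)%N by lia.
have := pair_dev2 (ltnW k_gt2); have := pair_devS k_gt2.
have : 21 <= (2 * (k - 1) + 1)%:R :> rat by rewrite (ler_nat _ 21); lia.
have : 19 <= (2 * (k - 2) + 1)%:R :> rat by rewrite (ler_nat _ 19); lia.
have := pair_dev_ge0 k 2; have := pair_dev_ge0 k 3.
move: (pair_dev k 2) (pair_dev k 3) (2 * (k - 1) + 1)%:R (2 * (k - 2) + 1)%:R => d2 d3 a b.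
move=> d3_ge0 d2_ge0 b_ge a_ge E3 E2.
have : 0 <= (a - 21) * d2 by apply: mulr_ge0; lra.
have : 0 <= (b - 19) * d3 by apply: mulr_ge0; lra.
lra.
Qed.

Lemma pair_dev_small k p : (11 <= k)%N -> (3 <= p)%N -> (2 * p.-1 <= k)%N ->
  (2 * k + 3)%:R * pair_dev k p <= 1.
Proof.
move=> k_ge11; elim: p => [|p IHp] // p_ge3 le_pk.
have [p2|p_ge3'] : p = 2%N \/ (3 <= p)%N by lia.
  have k_gt2 : (2 < k)%N by lia.
  have := pair_dev23 k_ge11; rewrite p2 (_ : 2 * k + 3 = 2 * (k - 2) + 1 + 6)%N; last by lia.
  by move=> key; rewrite natrD mulrDl pair_devS //; lra.
apply: le_trans (IHp p_ge3' _); last by lia.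
by rewrite ler_wpM2l // pair_devS_le //; lia.
Qed.

Lemma pair_factor_bounds k p : 1 - pair_dev k p <= pair_factor k p <= 1 + pair_dev k p.
Proof.
rewrite /pair_factor -signr_odd; have := pair_dev_ge0 k p.
by case: odd; rewrite ?expr0 ?expr1 ?mul1r ?mulN1r => d_ge0; apply/andP; split; lra.
Qed.

(* The margins left by bin_log_concave at the weights 2p and 2p + 1. *)
Definition pair_close k p :=
  (2 * p)%:R * pair_factor k p.+1 <= (2 * p + 1)%:R * pair_factor k p
  /\ (2 * p + 1)%:R * pair_factor k p <= (2 * p + 2)%:R * pair_factor k p.+1.

Lemma pair_close_of_dev k p :
  pair_dev k p <= (4 * p + 3)%:R^-1 -> pair_dev k p.+1 <= (4 * p + 3)%:R^-1 -> pair_close k p.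
Proof.
have := pair_factor_bounds k p; have := pair_factor_bounds k p.+1.
have := pair_dev_ge0 k p; have := pair_dev_ge0 k p.+1.
have : (4 * p + 3)%:R * (4 * p + 3)%:R^-1 = 1 :> rat by rewrite divff // pnatr_eq0 addn3.
have : 0 <= p%:R :> rat by [].
rewrite /pair_close; move: (pair_factor k p) (pair_factor k p.+1) => G G'.
move: ((4 * p + 3)%:R^-1) (pair_dev k p) (pair_dev k p.+1) => e d d'.
move=> p_ge0 e_inv d'_ge0 d_ge0 /andP[lo' hi'] /andP[lo hi] d_le d'_le.
split; nra.
Qed.

Lemma pair_close_large k p : (11 <= k)%N -> (2 <= p)%N -> (2 * p <= k)%N -> pair_close k p.
Proof.
move=> k_ge11 p_ge2 le_pk.
have [->|p_ge3] : p = 2%N \/ (3 <= p)%N by lia.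
  have sg2 : (-1) ^+ 2 = 1 :> rat by rewrite expr2 mulN1r opprK.
  have sg3 : (-1) ^+ 3 = -1 :> rat by rewrite exprS sg2 mulr1.
  rewrite /pair_close /pair_factor sg2 sg3 mul1r mulN1r.
  have := pair_dev23 k_ge11; have := pair_dev_ge0 k 2; have := pair_dev_ge0 k 3.
  move: (pair_dev k 2) (pair_dev k 3) => d2 d3 d3_ge0 d2_ge0 key.
  by split; lra.
have dev_le q : (3 <= q)%N -> (2 * q.-1 <= k)%N -> pair_dev k q <= (4 * p + 3)%:R^-1.
  move=> q_ge3 le_qk; have p43_gt0 : 0 < (4 * p + 3)%:R :> rat by rewrite ltr0n addn3.
  rewrite -(ler_pM2l p43_gt0) mulfV ?gt_eqF //.
  apply: le_trans (pair_dev_small k_ge11 q_ge3 le_qk).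
  by rewrite ler_wpM2r ?pair_dev_ge0 // ler_nat; lia.
by apply: pair_close_of_dev; apply: dev_le; lia.
Qed.

Lemma pair_factor2_ge1 k : 1 <= pair_factor k 2.
Proof. by rewrite /pair_factor expr2 mulN1r opprK mul1r lerDl pair_dev_ge0. Qed.

Lemma scaled_weight_count34 k : (2 <= k)%N ->
  (k.*2.+2)%:Z * scaled_weight_count k 4 <= scaled_weight_count k 3 ^+ 2.
Proof.
move=> k_ge2; rewrite -(ler_int rat) intrM rmorphXn /= !scaled_weight_count_pair //.
have := bin4_le_bin3_sq k.*2.+1; rewrite -(ler_nat rat) natrM natrX.
have := pair_factor2_ge1 k; rewrite -[uphalf 3]/2%N -[uphalf 4]/2%N.
move: (pair_factor k 2) => G G_ge1 bin_le; have G_ge0 : 0 <= G by apply: le_trans G_ge1.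
rewrite -[_%:~R]/(k.*2.+2)%:R mulrA exprMn.
apply: le_trans (ler_wpM2r G_ge0 bin_le) _.
by rewrite ler_wpM2l ?sqr_ge0 // expr2 ler_peMl.
Qed.

Section CloseFactors.

Variable k : nat.
Hypothesis k_close : forall p, (2 <= p)%N -> (2 * p <= k)%N -> pair_close k p.

Lemma pair_factor_gt0 p : (2 <= p)%N -> (2 * p <= k + 2)%N -> 0 < pair_factor k p.
Proof.
elim: p => [|p IHp] // p_ge2 le_pk.
have [->|p_ge2'] : p.+1 = 2%N \/ (2 <= p)%N by lia.
  exact: lt_le_trans ltr01 (pair_factor2_ge1 k).
have [_ close] : pair_close k p by apply: k_close; lia.
have G_gt0 : 0 < pair_factor k p by apply: IHp; lia.
have c_gt0 : 0 < (2 * p + 2)%:R :> rat by rewrite ltr0n addn2.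
rewrite -(pmulr_rgt0 _ c_gt0); apply: (lt_le_trans _ close).
by rewrite mulr_gt0 // ltr0n addn1.
Qed.

Lemma scaled_weight_count_gt0 t : (3 <= t)%N -> (t <= k)%N -> 0 < scaled_weight_count k t.
Proof.
move=> t_ge3 le_tk; rewrite -(ltr0z rat) scaled_weight_count_pair; last first.
  by apply: leq_trans (uphalf_leq le_tk) _; rewrite leq_uphalf_double; lia.
rewrite mulr_gt0 ?ltr0n ?bin_gt0 //; first lia.
by apply: pair_factor_gt0; rewrite ?geq_uphalf_double -?mul2n -?uphalfK; lia.
Qed.

Lemma scaled_weight_count_log_concave i : (4 <= i)%N -> (i <= k)%N ->
  scaled_weight_count k i.-1 * scaled_weight_count k i.+1 <= scaled_weight_count k i ^+ 2.
Proof.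
move=> i_ge4 le_ik; have /(bin_log_concave k.*2.+1) : (0 < i)%N by lia.
rewrite -(ler_nat rat) [X in _ <= X]natrM natrX !natrM -(ler_int rat) intrM rmorphXn /=.
have [p i_eq] : exists p, i = (odd i + p.*2)%N by exists i./2; rewrite odd_double_half.
case: (odd i) i_eq => -> /= in i_ge4 le_ik *.
  have [_ close] : pair_close k p by apply: k_close; lia.
  rewrite !scaled_weight_count_pair; try by rewrite leq_uphalf_double; lia.
  rewrite add1n add0n /= doubleK uphalf_double.
  rewrite addn1 addn2 mul2n in close; move=> bin.
  have Gp_gt0 : 0 < pair_factor k p by rewrite pair_factor_gt0 //; lia.
  have Gp1_gt0 : 0 < pair_factor k p.+1 by rewrite pair_factor_gt0 //; lia.
  rewrite mulrACA exprMn; apply: ler_log_concave_factors bin close;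
    by rewrite ?ltr0Sn ?mulr_ge0 ?ler0n ?(ltW Gp_gt0) ?(ltW Gp1_gt0).
case: p => [|q] in i_ge4 le_ik *; first by [].
have [close _] : pair_close k q.+1 by apply: k_close; lia.
rewrite !scaled_weight_count_pair; try by rewrite leq_uphalf_double; lia.
rewrite add0n doubleS /= doubleK uphalf_double => bin.
rewrite mul2n doubleS addn1 in close.
have Gq1_gt0 : 0 < pair_factor k q.+1 by rewrite pair_factor_gt0 //; lia.
have Gq2_gt0 : 0 < pair_factor k q.+2 by rewrite pair_factor_gt0 //; lia.
rewrite mulrACA [_ * pair_factor k q.+2]mulrC exprMn; apply: ler_log_concave_factors bin close;
  by rewrite ?ltr0Sn ?mulr_ge0 ?ler0n ?(ltW Gq1_gt0) ?(ltW Gq2_gt0).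
Qed.

End CloseFactors.

Lemma perfect1_log_concave n k (C : {set 'rV['F_2]_n}) :
  n = k.*2.+1 -> odd k -> (3 <= k)%N -> perfect1 C -> 0 \in C ->
  (forall p, (2 <= p)%N -> (2 * p <= k)%N -> pair_close k p) -> log_concave_code C.
Proof.
move=> n_eq k_odd k_ge3 C_perfect C0 k_close.
have countE := perfect1_scaled_weight_count n_eq C_perfect C0.
apply: (log_concave_symmetric (a := weight_count C)).
- by lia.
- by rewrite weight_count0 C0.
- by have := countE 1%N; rewrite scaled_weight_count1; lia.
- by have := countE 2%N; rewrite scaled_weight_count2; lia.
- move=> i le_in; have := countE (n - i)%N (leq_subr _ _); have := countE i le_in.
  have := @scaled_weight_count_sym k i k_odd; rewrite -n_eq => /(_ le_in) -> <- /eqP.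
  by rewrite eqz_nat eqn_pmul2l // => /eqP.
- move=> i i_ge3 le_2in; have le_ik : (i <= k)%N by lia.
  have := scaled_weight_count_gt0 k_close i_ge3 le_ik.
  by rewrite -countE ?ltz_nat ?muln_gt0 //; lia.
- have k_ge2 : (2 <= k)%N by lia.
  have [le4n le3n] : (4 <= n)%N /\ (3 <= n)%N by lia.
  have := scaled_weight_count34 k_ge2; rewrite -(countE 4%N le4n) -(countE 3%N le3n).
  rewrite (_ : k.*2.+2 = n.+1 * 1)%N; last by rewrite muln1 n_eq.
  by move=> /(scaled_log_concave (ltn0Sn n)); rewrite mul1n.
move=> i i_ge4 le_2in; apply: (scaled_log_concave (ltn0Sn n)).
rewrite countE; last by lia.
rewrite countE; last by lia.
rewrite countE; last by lia.
by apply: scaled_weight_count_log_concave => //; lia.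
Qed.

Theorem mainTheorem1 (m : nat) (hm : m = 3%N \/ (5 <= m)%N) :
  log_concave_code (hamming_code m).
Proof.
have m_ge3 : (3 <= m)%N by case: hm => [->|]; lia.
have pow_m : (2 ^ m = (2 ^ m.-1).*2)%N by rewrite -mul2n -expnS prednK //; lia.
have pow_ge4 : (4 <= 2 ^ m.-1)%N by rewrite (_ : 4 = 2 ^ 2)%N // leq_exp2l //; lia.
apply: (@perfect1_log_concave _ (2 ^ m.-1 - 1)).
- by rewrite pow_m; lia.
- by rewrite oddB ?expn_gt0 // oddX; case: (m.-1) pow_ge4.
- by lia.
- exact: hamming_code_perfect.
- exact: mem0_hamming_code.
move=> p p_ge2 le_pk; case: hm => [m3|m_ge5].
  by move: le_pk; rewrite m3 (_ : (2 ^ 3.-1 - 1 = 3)%N) //; lia.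
apply: pair_close_large => //.
have : (2 ^ 4 <= 2 ^ m.-1)%N by rewrite leq_exp2l //; lia.
lia.
Qed.
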